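(* A threshold function $f$ is linear read-once if and only if no restriction of $f$ equals, up to renaming of variables, a function in $\mathcal{G}$, where $\mathcal{G}$ is the set of all functions obtained from $g_n(x_1,\ldots,x_n)=x_1x_2\vee x_1x_3\vee\cdots\vee x_1x_n\vee x_2x_3\cdots x_n$, $n\ge3$, by negating some (possibly none) of the variables.
   Context: $f$ on $\{0,1\}^n$ is a threshold function if there are $w_1,\ldots,w_n,t\in\mathbb{R}$ with $f(\mathbf{x})=0\iff\sum_iw_ix_i\le t$. A restriction of $f$ is obtained by fixing some variables to constants. Linear read-once (lro): constant or representable by a nested formula (literals $x,\overline{x}$ are nested; $x\vee t$, $x\wedge t$, $\overline{x}\vee t$, $\overline{x}\wedge t$ are nested when $t$ is nested and contains neither $x$ nor $\overline{x}$). *)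

From Stdlib Require Import Reals.
From mathcomp Require Import all_boot.
Set Implicit Arguments. Unset Strict Implicit. Unset Printing Implicit Defensive.

Definition bfun (n : nat) := ('I_n -> bool) -> bool.

Definition wsum (n : nat) (w : 'I_n -> R) (x : 'I_n -> bool) : R :=
  \big[Rplus/R0]_(i < n) (if x i then w i else R0).

Definition threshold (n : nat) (f : bfun n) : Prop :=
  exists (w : 'I_n -> R) (t : R),
    forall x : 'I_n -> bool, f x = false <-> Rle (wsum w x) t.

(* Nested formulas. [neg = true] means the literal is the complemented variable. *)
Inductive nformula (n : nat) : Type :=
  | NLit of 'I_n & bool
  | NOr  of 'I_n & bool & nformula n
  | NAnd of 'I_n & bool & nformula n.

Fixpoint nf_vars (n : nat) (t : nformula n) : seq 'I_n :=
  match t with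
  | NLit i _ => [:: i]
  | NOr i _ t' => i :: nf_vars t'
  | NAnd i _ t' => i :: nf_vars t'
  end.

Fixpoint nested (n : nat) (t : nformula n) : bool :=
  match t with
  | NLit _ _ => true
  | NOr i _ t' => (i \notin nf_vars t') && nested t'
  | NAnd i _ t' => (i \notin nf_vars t') && nested t'
  end.

Definition lit_val (n : nat) (i : 'I_n) (neg : bool) (x : 'I_n -> bool) : bool :=
  x i (+) neg.

Fixpoint nf_eval (n : nat) (t : nformula n) (x : 'I_n -> bool) : bool :=
  match t with
  | NLit i b => lit_val i b x
  | NOr i b t' => lit_val i b x || nf_eval t' x
  | NAnd i b t' => lit_val i b x && nf_eval t' x
  end.

Definition lro (n : nat) (f : bfun n) : Prop :=
  (exists c : bool, forall x, f x = c) \/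
  (exists t : nformula n, nested t /\ forall x, f x = nf_eval t x).

(* g_m(x_1..x_m) = x1x2 \/ x1x3 \/ ... \/ x1xm \/ x2x3...xm  (0-indexed here:
   variable 0 plays the role of x_1). *)
Definition gfun (m : nat) : bfun m := fun y =>
  [exists i : 'I_m, exists j : 'I_m,
     [&& val i == 0, 0 < val j, y i & y j]]
  || [forall j : 'I_m, (0 < val j) ==> y j].

Definition gneg (m : nat) (s : 'I_m -> bool) : bfun m :=
  fun y => gfun (fun j => y j (+) s j).

(* Restriction of f followed by renaming: the free (unfixed) variables are
   exactly the image of the injective map sigma : 'I_m -> 'I_n, variable j of
   the new function being x_(sigma j); all other variables are fixed to c. *)
Definition restrict_rename (n m : nat) (f : bfun n) (sigma : 'I_m -> 'I_n)
    (c : 'I_n -> bool) : bfun m :=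
  fun y => f (fun i => match [pick j | sigma j == i] with
                       | Some j => y j
                       | None => c i
                       end).

Definition has_G_restriction (n : nat) (f : bfun n) : Prop :=
  exists (m : nat) (sigma : 'I_m -> 'I_n) (c : 'I_n -> bool) (s : 'I_m -> bool),
    3 <= m /\ injective sigma /\
    forall y : 'I_m -> bool, restrict_rename f sigma c y = gneg s y.

(* A nested formula has an outermost literal forcing its value, and under a restriction
   this literal either stays free or becomes a constant; hence every restriction of a
   linear read-once function has a forcing literal, whereas no function of G has one.

   Conversely, orient the variables of the threshold function f so that all weights count
   positively, and pick a free variable x_i of largest weight. If x_i alone makes f true,
   x_i forces 1 and f = x_i \/ t with t obtained recursively; if all the other free
   variables together leave f false, x_i forces 0 and f = x_i /\ t. Otherwise the set
   function F(S) = f(exactly the variables of S set favourably) is monotone, x_i dominates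
   every other variable, F({i}) = 0 and F(U \ i) = 1. An inclusion-maximal false set
   S0 containing i and an inclusion-minimal true set T0 between S0 \ i and U \ i then
   restrict f, on x_i and the variables of T0 \ S0, to g up to negations; dominance of x_i
   gives |T0 \ S0| >= 2. *)

From HB Require Import structures.
From Stdlib Require Import Reals Lra.
From mathcomp Require Import all_boot.
Set Implicit Arguments. Unset Strict Implicit. Unset Printing Implicit Defensive.

(** * Forcing literals *)

Definition has_forcing_literal (m : nat) (h : bfun m) : Prop :=
  exists (j : 'I_m) (v b : bool), forall y, y j = v -> h y = b.

Lemma const_forcing_literal (m : nat) (h : bfun m) (b : bool) :
  0 < m -> (forall y, h y = b) -> has_forcing_literal h.
Proof. by move=> m_gt0 hb; exists (Ordinal m_gt0), true, b. Qed.

Section GFunction.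

Variables (m : nat) (m_ge3 : 3 <= m).

Lemma exists_pos_other (j : 'I_m) : exists2 k : 'I_m, 0 < k & k != j.
Proof.
have [lt1m lt2m] : 1 < m /\ 2 < m by split=> //; apply: leq_trans m_ge3.
have [j1|j1] := eqVneq (val j) 1.
  by exists (Ordinal lt2m) => //; apply/eqP => /(congr1 val); rewrite /= j1.
by exists (Ordinal lt1m) => //; apply: contra_neq j1 => <-.
Qed.

Lemma gfun_ext (u v : 'I_m -> bool) : u =1 v -> gfun u = gfun v.
Proof.
move=> uv; rewrite /gfun; congr (_ || _).
  by apply: eq_existsb => i; apply: eq_existsb => j; rewrite !uv.
by apply: eq_forallb => j; rewrite uv.
Qed.

Lemma gfun_all_true : gfun (fun _ : 'I_m => true).
Proof. by apply/orP; right; apply/forallP => j; rewrite implybT. Qed.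

Lemma gfun_all_false : gfun (fun _ : 'I_m => false) = false.
Proof.
have [k k_gt0 _] := exists_pos_other (Ordinal (leq_trans (isT : 0 < 3) m_ge3)).
apply/norP; split; first by apply/existsPn => i; apply/existsPn => j; rewrite !andbF.
by apply/forallPn; exists k; rewrite k_gt0.
Qed.

Lemma gfun_single (j : 'I_m) : gfun (fun q => q == j) = false.
Proof.
have [k k_gt0 kj] := exists_pos_other j.
apply/norP; split; last by apply/forallPn; exists k; rewrite k_gt0 (negbTE kj).
apply/existsPn => i; apply/existsPn => l; apply/negP => /and4P [/eqP i0 + /eqP ij /eqP lj].
by rewrite lj -ij i0.
Qed.

(* If [j] is [x_1], the big conjunction holds; otherwise [x_1] and some other [x_k]. *)
Lemma gfun_cosingle (j : 'I_m) : gfun (fun q => q != j).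
Proof.
case: (posnP j) => [j0|j_gt0].
  apply/orP; right; apply/forallP => q; apply/implyP => q_gt0.
  by apply: contraTneq q_gt0 => ->; apply/negP; rewrite /= j0.
have [k k_gt0 kj] := exists_pos_other j.
have m_gt0 : 0 < m by apply: leq_trans m_ge3.
apply/orP; left; apply/existsP; exists (Ordinal m_gt0); apply/existsP; exists k.
rewrite /= k_gt0 kj andbT; apply/eqP => /(congr1 val) /= j0.
by rewrite -j0 in j_gt0.
Qed.

Lemma gfun_no_forcing_literal : ~ has_forcing_literal (@gfun m).
Proof.
move=> [j [[] [b Hb]]].
  move: (Hb (fun q => q == j) (eqxx j)) (Hb (fun _ => true) erefl).
  by rewrite gfun_single gfun_all_true => <-.
move: (Hb (fun q => q != j)) (Hb (fun _ => false) erefl).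
by rewrite eqxx gfun_all_false gfun_cosingle => /(_ erefl) <-.
Qed.

Lemma gneg_no_forcing_literal (s : 'I_m -> bool) : ~ has_forcing_literal (gneg s).
Proof.
move=> [j [v [b Hb]]]; apply: gfun_no_forcing_literal; exists j, (v (+) s j), b => u uj.
rewrite -(Hb (fun q => u q (+) s q)); last by rewrite uj -addbA addbb addbF.
by apply: gfun_ext => q; rewrite -addbA addbb addbF.
Qed.

End GFunction.

Definition restriction_point (n m : nat) (sigma : 'I_m -> 'I_n) (c : 'I_n -> bool)
    (y : 'I_m -> bool) : 'I_n -> bool :=
  fun i => match [pick j | sigma j == i] with Some j => y j | None => c i end.

Lemma restrict_renameE (n m : nat) (f : bfun n) sigma c (y : 'I_m -> bool) :
  restrict_rename f sigma c y = f (restriction_point sigma c y).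
Proof. by []. Qed.

Lemma restriction_point_coord (n m : nat) (sigma : 'I_m -> 'I_n) c (i : 'I_n) :
  (exists j, forall y, restriction_point sigma c y i = y j) \/
  (exists b, forall y, restriction_point sigma c y i = b).
Proof.
by rewrite /restriction_point; case: pickP => [j _|_]; [left; exists j | right; exists (c i)].
Qed.

Lemma restriction_point_sigma (n m : nat) (sigma : 'I_m -> 'I_n) c y j :
  injective sigma -> restriction_point sigma c y (sigma j) = y j.
Proof.
move=> sigma_inj; rewrite /restriction_point; case: pickP => [j' /eqP /sigma_inj -> //|].
by move=> /(_ j); rewrite eqxx.
Qed.

Lemma restriction_point_out (n m : nat) (sigma : 'I_m -> 'I_n) c y i :
  (forall j, sigma j != i) -> restriction_point sigma c y i = c i.
Proof. by move=> Hi; rewrite /restriction_point; case: pickP => // j; rewrite (negbTE (Hi j)). Qed.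

Lemma nf_eval_forcing_literal (n m : nat) (z : ('I_m -> bool) -> 'I_n -> bool) (t : nformula n) :
  0 < m ->
  (forall i, (exists j, forall y, z y i = y j) \/ (exists b, forall y, z y i = b)) ->
  has_forcing_literal (fun y => nf_eval t (z y)).
Proof.
move=> m_gt0 z_coord; elim: t => [i b|i b t IH|i b t IH] /=; rewrite /lit_val;
  case: (z_coord i) => [[j zj]|[l zl]].
- by exists j, true, (~~ b) => y yj; rewrite zj yj.
- by apply: (@const_forcing_literal _ _ (l (+) b)) => // y; rewrite zl.
- by exists j, (~~ b), true => y yj; rewrite zj yj addNb addbb.
- case E: (l (+) b); first by apply: (@const_forcing_literal _ _ true) => // y; rewrite zl E.
  by case: IH => j [v [b' Hb']]; exists j, v, b' => y /Hb' <-; rewrite zl E.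
- by exists j, b, false => y yj; rewrite zj yj addbb.
- case E: (l (+) b); last by apply: (@const_forcing_literal _ _ false) => // y; rewrite zl E.
  by case: IH => j [v [b' Hb']]; exists j, v, b' => y /Hb' <-; rewrite zl E.
Qed.

Lemma lro_restriction_forcing_literal (n m : nat) (f : bfun n) (sigma : 'I_m -> 'I_n) c :
  0 < m -> lro f -> has_forcing_literal (restrict_rename f sigma c).
Proof.
move=> m_gt0 [[b fb]|[t [_ ft]]].
  by apply: (@const_forcing_literal _ _ b) => // y; rewrite restrict_renameE fb.
have [j [v [b Hb]]] := nf_eval_forcing_literal t m_gt0 (@restriction_point_coord _ _ sigma c).
by exists j, v, b => y /Hb <-; rewrite restrict_renameE ft.
Qed.

Lemma lro_no_G_restriction (n : nat) (f : bfun n) : lro f -> ~ has_G_restriction f.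
Proof.
move=> f_lro [m [sigma [c [s [m_ge3 [_ fG]]]]]].
have m_gt0 : 0 < m by apply: leq_trans m_ge3.
have [j [v [b Hb]]] := lro_restriction_forcing_literal sigma c m_gt0 f_lro.
by apply: (gneg_no_forcing_literal (s := s) m_ge3); exists j, v, b => y /Hb <-; rewrite fG.
Qed.

(** * Restrictions equal to a function of G *)

Lemma gfun_lift (k : nat) (u : 'I_k.+1 -> bool) :
  gfun u = (u ord0 && [exists q, u (lift ord0 q)]) || [forall q, u (lift ord0 q)].
Proof.
rewrite /gfun; congr orb.
  apply/existsP/andP => [[i /existsP [j /and4P [/eqP i0 j_gt0 ui uj]]]|[u0 /existsP [q uq]]].
    have i0' : i = ord0 by apply: val_inj.
    split; first by rewrite -i0'.
    apply/existsP; case: (unliftP ord0 j) uj j_gt0 => [q ->|->] //; by exists q.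
  by exists ord0; apply/existsP; exists (lift ord0 q); rewrite /= u0 uq.
apply/forallP/forallP => H q; first by move: (H (lift ord0 q)).
by apply/implyP; case: (unliftP ord0 q) => [q' ->|->] //= _; apply: H.
Qed.

Lemma exists_enum_val (T : finType) (A : {set T}) (P : pred T) :
  [exists q : 'I_#|A|, P (enum_val q)] = [exists k in A, P k].
Proof.
apply/existsP/exists_inP => [[q Pq]|[k kA Pk]]; first by exists (enum_val q); rewrite ?enum_valP.
by exists (enum_rank_in kA k); rewrite enum_rankK_in.
Qed.

Lemma forall_enum_val (T : finType) (A : {set T}) (P : pred T) :
  [forall q : 'I_#|A|, P (enum_val q)] = [forall k in A, P k].
Proof.
apply/forallP/forall_inP => [H k kA|H q]; last exact/H/enum_valP.
by have := H (enum_rank_in kA k); rewrite enum_rankK_in.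
Qed.

Lemma G_restriction_of_pattern (n : nat) (f : bfun n) (p o : 'I_n -> bool) (i : 'I_n)
    (B : {set 'I_n}) :
  i \notin B -> 1 < #|B| ->
  (forall x, (forall j, j \notin i |: B -> x j = p j) ->
     f x = ((x i == o i) && [exists k in B, x k == o k]) || [forall k in B, x k == o k]) ->
  has_G_restriction f.
Proof.
move=> iB B_gt1 fB.
pose sigma (q : 'I_#|B|.+1) := if unlift ord0 q is Some k then enum_val k else i.
have sigma0 : sigma ord0 = i by rewrite /sigma unlift_none.
have sigma_lift q : sigma (lift ord0 q) = enum_val q by rewrite /sigma liftK.
have sigma_inj : injective sigma.
  have sigma_B k : sigma (lift ord0 k) != sigma ord0.
    by rewrite sigma_lift sigma0; apply: contraNneq iB => <-; apply: enum_valP.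
  move=> q1 q2; case: (unliftP ord0 q1) => [k1 ->|->]; case: (unliftP ord0 q2) => [k2 ->|->] //.
  - by rewrite !sigma_lift => /enum_val_inj ->.
  - by move/eqP; rewrite (negbTE (sigma_B k1)).
  - by move/esym/eqP; rewrite (negbTE (sigma_B k2)).
exists #|B|.+1, sigma, p, (fun q => ~~ o (sigma q)); do 2!split=> //.
move=> y; rewrite restrict_renameE fB; last first.
  move=> j; rewrite in_setU1 negb_or => /andP [ji jB].
  apply: restriction_point_out => q; case: (unliftP ord0 q) => [q' ->|->].
    by rewrite sigma_lift; apply: contraNneq jB => <-; apply: enum_valP.
  by rewrite sigma0 eq_sym.
have yx q : restriction_point sigma p y (sigma q) = y q := restriction_point_sigma p y q sigma_inj.
have xor_neg (a b : bool) : a (+) ~~ b = (a == b) by case: a; case: b.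
rewrite /gneg gfun_lift -exists_enum_val -forall_enum_val -{1}sigma0 yx /= sigma0 xor_neg.
congr (_ && _ || _); [apply: eq_existsb | apply: eq_forallb] => q;
  by rewrite -sigma_lift yx xor_neg.
Qed.

Section DominantVariable.

Variables (T : finType) (F : {set T} -> bool) (U : {set T}) (i : T).
Hypothesis F_mono : forall S S' : {set T}, S \subset S' -> F S -> F S'.

Lemma monotone_G_pattern (C B : {set T}) :
  i \notin C -> i \notin B -> (forall k, k \in B -> k \notin C) ->
  F (i |: C) = false -> F (C :|: B) ->
  (forall k, k \in B -> F (k |: (i |: C))) -> (forall k, k \in B -> F ((C :|: B) :\ k) = false) ->
  forall S : {set T}, (forall j, j \notin i |: B -> (j \in S) = (j \in C)) ->
    F S = ((i \in S) && [exists k in B, k \in S]) || (B \subset S).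
Proof.
move=> iC iB BC F_iC F_CB F_kiC F_CBk S HS.
have C_S j : j \in C -> j \in S.
  move=> jC; rewrite HS // in_setU1 negb_or; apply/andP; split.
    by apply: contraNneq iC => <-.
  by apply: contraTN jC; apply: BC.
have S_C j : j \in S -> j \notin i |: B -> j \in C by move=> jS /HS <-.
case: (boolP (B \subset S)) => BS; rewrite ?orbT ?orbF.
  by apply: F_mono F_CB; rewrite subUset BS andbT; apply/subsetP.
case: (boolP (i \in S)) => iS /=.
  case: (boolP [exists k in B, k \in S]) => [/exists_inP [k kB kS]|/exists_inPn noB].
    apply: F_mono (F_kiC k kB); apply/subsetP => j.
    by rewrite !in_setU1 => /or3P [/eqP ->|/eqP ->|/C_S].
  apply: contraFF F_iC; apply: F_mono; apply/subsetP => j jS; rewrite in_setU1.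
  case: (eqVneq j i) => //= ji; apply: S_C => //.
  by rewrite in_setU1 negb_or ji; apply: contraTN jS; apply: noB.
case/subsetPn: BS => k0 k0B k0S; apply: contraFF (F_CBk k0 k0B); apply: F_mono.
apply/subsetP => j jS; rewrite in_setD1 in_setU; apply/andP; split.
  by apply: contraNneq k0S => <-.
case: (boolP (j \in B)) => jB; rewrite ?orbT // orbF; apply: S_C => //.
by rewrite in_setU1 negb_or jB andbT; apply: contraNneq iS => <-.
Qed.

Hypothesis i_dominant : forall (C : {set T}) k,
  C \subset U -> k \in U -> i \notin C -> k \notin C ->
  F (k |: C) -> F (i |: C).
Hypothesis iU : i \in U.
Hypothesis F_i : F [set i] = false.
Hypothesis F_Ui : F (U :\ i).

Lemma dominant_variable_G_pattern :
  exists C B : {set T}, [/\ C \subset U, B \subset U :\ i, 1 < #|B| &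
  forall S : {set T}, (forall j, j \notin i |: B -> (j \in S) = (j \in C)) ->
    F S = ((i \in S) && [exists k in B, k \in S]) || (B \subset S)].
Proof.
(* [S0] is an inclusion-maximal false set containing [i], [C = S0 \ i], [T0] an
   inclusion-minimal true set between [C] and [U \ i], and [B = T0 \ C]. *)
pose P (S : {set T}) := [&& i \in S, S \subset U & ~~ F S].
have [S0 /maxsetP [/and3P [iS0 S0U /negbTE FS0] S0max] _] : {S0 | maxset P S0 & [set i] \subset S0}.
  by apply: maxset_exists; rewrite /P set11 sub1set iU F_i.
set C := S0 :\ i.
have S0E : S0 = i |: C by rewrite setD1K.
have CU : C \subset U by rewrite (subset_trans (subD1set S0 i)).
have iC : i \notin C by rewrite !inE eqxx.
pose Q (S : {set T}) := [&& C \subset S, S \subset U :\ i & F S].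
have [T0 /minsetP [/and3P [CT0 T0Ui FT0] T0min] _] : {T0 | minset Q T0 & T0 \subset U :\ i}.
  by apply: minset_exists; rewrite /Q subxx F_Ui setSD.
set B := T0 :\: C.
have T0E : T0 = C :|: B.
  apply/setP => j; rewrite in_setU [j \in B]in_setD.
  by case: (boolP (j \in C)) => [jC|_] //=; rewrite (subsetP CT0 j jC).
have BUi : B \subset U :\ i by rewrite (subset_trans (subsetDl T0 C)).
have B_facts k : k \in B -> [/\ k \in U, k != i & k \notin C].
  move=> kB; have := subsetP BUi k kB; rewrite in_setD1 => /andP [ki kU].
  by split=> //; move: kB; rewrite in_setD => /andP [].
have F_S0k k : k \in B -> F (k |: S0).
  case/B_facts => kU ki kC; apply: contraT => nF.
  have kS0 : k \notin S0 by rewrite S0E in_setU1 negb_or ki.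
  have PkS0 : P (k |: S0) by rewrite /P in_setU1 iS0 orbT subUset sub1set kU S0U.
  by move: (S0max _ PkS0 (subsetUr _ _)) => /setP /(_ k); rewrite in_setU1 eqxx (negbTE kS0).
have F_T0k k : k \in B -> F (T0 :\ k) = false.
  move=> kB; have [kU ki kC] := B_facts k kB; apply: negbTE; apply/negP => F_T0k.
  have QT0k : Q (T0 :\ k).
    apply/and3P; split=> //; last exact: subset_trans (subD1set T0 k) T0Ui.
    by apply/subsetP => j jC; rewrite in_setD1 (subsetP CT0 j jC) andbT; apply: contraNneq kC => <-.
  have kT0 : k \in T0 by rewrite T0E in_setU kB orbT.
  by move: (T0min _ QT0k (subD1set T0 k)) => /setP /(_ k); rewrite in_setD1 eqxx kT0.
have B_gt1 : 1 < #|B|.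
  rewrite ltnNge; apply/negP => B_le1; have [B0|[k kB]] := set_0Vmem B.
    by move: FS0 => /negbT /negP; apply; apply: F_mono FT0; rewrite T0E B0 setU0 S0E subsetUr.
  have /cards1P [x Bx] : #|B| == 1 by rewrite eqn_leq B_le1 card_gt0; apply/set0Pn; exists k.
  have [xU _ xC] : [/\ x \in U, x != i & x \notin C] by apply: B_facts; rewrite Bx set11.
  by move: (i_dominant CU xU iC xC); rewrite -S0E FS0 setUC -Bx -T0E FT0 => /(_ isT).
have iB : i \notin B by apply/negP => /B_facts [_ /eqP].
exists C, B; split=> //; apply: monotone_G_pattern => //; rewrite -?S0E -?T0E //.
by move=> k /B_facts [].
Qed.
End DominantVariable.

(** * Threshold functions *)

Local Open Scope R_scope.

Lemma Rplus_associative : associative Rplus.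
Proof. by move=> x y z; rewrite Rplus_assoc. Qed.
HB.instance Definition _ :=
  Monoid.isComLaw.Build R R0 Rplus Rplus_associative Rplus_comm Rplus_0_l.

Definition contrib (n : nat) (w : 'I_n -> R) (k : 'I_n) (v : bool) : R := if v then w k else R0.

Definition wle (n : nat) (w : 'I_n -> R) (x y : 'I_n -> bool) : Prop :=
  forall k, contrib w k (x k) <= contrib w k (y k).

Definition wpos (n : nat) (w : 'I_n -> R) (k : 'I_n) : bool :=
  if Rlt_dec 0 (w k) then true else false.

Section WeightedSums.

Variables (n : nat) (w : 'I_n -> R).

Lemma wsum_le (x y : 'I_n -> bool) : wle w x y -> wsum w x <= wsum w y.
Proof. by move=> xy; apply: (big_ind2 Rle) => [|*|k _]; [lra | lra | apply: xy]. Qed.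

Lemma wsum_D1 (x : 'I_n -> bool) (i : 'I_n) :
  wsum w x = contrib w i (x i) + \big[Rplus/R0]_(j | j != i) contrib w j (x j).
Proof. by rewrite /wsum (bigD1 i). Qed.

Lemma wsum_sub1 (x y : 'I_n -> bool) (i : 'I_n) : (forall j, j != i -> x j = y j) ->
  wsum w x - wsum w y = contrib w i (x i) - contrib w i (y i).
Proof.
move=> xy; rewrite (wsum_D1 x i) (wsum_D1 y i).
have -> : \big[Rplus/R0]_(j | j != i) contrib w j (x j) =
          \big[Rplus/R0]_(j | j != i) contrib w j (y j) by apply: eq_bigr => j /xy ->.
lra.
Qed.

Lemma contrib_negwpos_le k v : contrib w k (~~ wpos w k) <= contrib w k v.
Proof. rewrite /contrib /wpos; case: Rlt_dec; case: v => /=; lra. Qed.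

Lemma contrib_wpos_sub k : contrib w k (wpos w k) - contrib w k (~~ wpos w k) = Rabs (w k).
Proof.
rewrite /contrib /wpos; case: Rlt_dec => /= h; first by rewrite Rabs_right; lra.
by rewrite Rabs_left1; lra.
Qed.

End WeightedSums.

Lemma exists_argmax (T : finType) (A : {set T}) (F : T -> R) :
  A != set0 -> exists2 i, i \in A & forall j, j \in A -> F j <= F i.
Proof.
case/set0Pn => i0 i0A.
pose ge (a b : T) := if Rle_dec (F b) (F a) then true else false.
have ge_refl : reflexive ge by move=> a; rewrite /ge; case: Rle_dec => // *; exfalso; lra.
have ge_trans : transitive ge.
  move=> b a d; rewrite /ge; case: (Rle_dec (F b) (F a)) => // ?.
  by case: (Rle_dec (F d) (F b)) => // ?; case: Rle_dec => // ?; exfalso; lra.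
have ge_total : total ge by move=> a b; rewrite /ge; do 2!case: Rle_dec => //= *; exfalso; lra.
case: (extremumP (P := mem A) id ge_refl ge_trans ge_total i0A) => i iA iF.
by exists i => // j /iF; rewrite /ge; case: Rle_dec.
Qed.

Definition glue (n : nat) (U : {set 'I_n}) (x c : 'I_n -> bool) : 'I_n -> bool :=
  fun j => if j \in U then x j else c j.

Lemma glue_fix (n : nat) (U : {set 'I_n}) (x c : 'I_n -> bool) (i : 'I_n) :
  i \in U -> glue U x c =1 glue (U :\ i) x (fun j => if j == i then x i else c j).
Proof. by move=> iU j; rewrite /glue in_setD1; case: (eqVneq j i) => [->|//]; rewrite iU. Qed.

(* The point of the subcube [U] (outside of which [c] is used) whose coordinates in [S]
   take the value favoured by the weights, and the others the opposite one. *)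
Definition oriented_point (n : nat) (w : 'I_n -> R) (U : {set 'I_n}) (c : 'I_n -> bool)
    (S : {set 'I_n}) : 'I_n -> bool :=
  glue U (fun j => (j \in S) == wpos w j) c.

Section OrientedPoints.

Variables (n : nat) (w : 'I_n -> R) (U : {set 'I_n}) (c : 'I_n -> bool).
Local Notation opoint := (oriented_point w U c).

Lemma oriented_point_mono (S S' : {set 'I_n}) : S \subset S' -> wle w (opoint S) (opoint S').
Proof.
move=> SS' k; rewrite /oriented_point /glue; case: (k \in U); last exact: Rle_refl.
case: (boolP (k \in S)) => kS; last exact: contrib_negwpos_le.
by rewrite (subsetP SS' k kS); apply: Rle_refl.
Qed.

Lemma wsum_oriented_point_add (S : {set 'I_n}) (k : 'I_n) : k \in U -> k \notin S ->
  wsum w (opoint (k |: S)) = wsum w (opoint S) + Rabs (w k).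
Proof.
move=> kU kS.
have : wsum w (opoint (k |: S)) - wsum w (opoint S) =
       contrib w k (wpos w k) - contrib w k (~~ wpos w k).
  rewrite (@wsum_sub1 _ w _ _ k) => [|j jk].
    by rewrite /oriented_point /glue kU in_setU1 eqxx (negbTE kS).
  by rewrite /oriented_point /glue in_setU1 (negbTE jk).
rewrite contrib_wpos_sub; lra.
Qed.

Lemma glue_oriented_point (x : 'I_n -> bool) :
  glue U x c =1 opoint [set j in U | x j == wpos w j].
Proof.
by move=> j; rewrite /oriented_point /glue inE; case: (j \in U); case: (x j); case: (wpos w j).
Qed.

End OrientedPoints.

Definition lro_on (n : nat) (U : {set 'I_n}) (h : bfun n) : Prop :=
  (exists b, forall x, h x = b) \/
  (exists t, [/\ nested t, {subset nf_vars t <= U} & forall x, h x = nf_eval t x]).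

(* If [x_i = v] forces the value [b], the formula for the other half of the cube extends
   by the literal [x_i = v] joined with [||] (if [b]) or [&&] (otherwise). *)
Lemma lro_on_extend (n : nat) (U : {set 'I_n}) (i : 'I_n) (v b : bool) (h h' : bfun n) :
  i \in U -> (forall x, x i = v -> h x = b) -> (forall x, x i = ~~ v -> h x = h' x) ->
  lro_on (U :\ i) h' -> lro_on U h.
Proof.
move=> iU hv hnv.
have xi_cases (x : 'I_n -> bool) : x i = v \/ x i = ~~ v by case: (x i); case: (v); auto.
case=> [[b' hb']|[t [t_nested t_vars ht]]].
  case: (eqVneq b' b) => [eb|b'b].
    by left; exists b => x; case: (xi_cases x) => xi; [rewrite hv | rewrite hnv // hb' eb].
  right; exists (NLit i (v (+) b)); split=> //; first by move=> j; rewrite inE => /eqP ->.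
  move=> x /=; rewrite /lit_val; case: (xi_cases x) => xi; first by rewrite hv // xi addKb.
  by rewrite hnv // hb' xi; move: b'b; case: (b); case: (b'); case: (v).
have it : i \notin nf_vars t by apply/negP => /t_vars; rewrite in_setD1 eqxx.
right; exists ((if b then @NOr n else @NAnd n) i (v (+) b) t); split.
- by case: (b) => /=; rewrite it.
- move=> j; case: (b) => /=; rewrite inE => /orP [/eqP -> //|/t_vars].
    by apply: (subsetP (subD1set U i)).
  by apply: (subsetP (subD1set U i)).
- move=> x; case: (xi_cases x) => xi.
    by rewrite hv //; case: (b) => /=; rewrite /lit_val xi addKb.
  by rewrite hnv // ht; case: (b) => /=; rewrite /lit_val xi; case: (v).
Qed.

Section ThresholdFunction.

Variables (n : nat) (w : 'I_n -> R) (t : R) (f : bfun n).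
Hypothesis f_false : forall x, f x = false <-> wsum w x <= t.

Lemma threshold_wsum_mono (x y : 'I_n -> bool) : wsum w x <= wsum w y -> f x -> f y.
Proof.
move=> xy fx; apply: contraT => /negbTE /f_false fy.
have : wsum w x <= t by lra.
by move/f_false; rewrite fx.
Qed.

Lemma threshold_mono (x y : 'I_n -> bool) : wle w x y -> f x -> f y.
Proof. by move/wsum_le; apply: threshold_wsum_mono. Qed.

Lemma threshold_ext (x y : 'I_n -> bool) : x =1 y -> f x = f y.
Proof. by move=> xy; apply/idP/idP; apply: threshold_mono => k; rewrite xy; apply: Rle_refl. Qed.

Lemma threshold_G_restriction (U : {set 'I_n}) (c : 'I_n -> bool) (i : 'I_n) :
  i \in U -> (forall j, j \in U -> Rabs (w j) <= Rabs (w i)) ->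
  f (oriented_point w U c [set i]) = false -> f (oriented_point w U c (U :\ i)) ->
  has_G_restriction f.
Proof.
move=> iU i_max F_i F_Ui.
pose F S := f (oriented_point w U c S).
have F_mono (S S' : {set 'I_n}) : S \subset S' -> F S -> F S'.
  by move=> SS'; apply: threshold_mono; apply: oriented_point_mono.
have i_dominant (C : {set 'I_n}) k : C \subset U -> k \in U -> i \notin C -> k \notin C ->
    F (k |: C) -> F (i |: C).
  rewrite /F => _ kU iC kC; apply: threshold_wsum_mono.
  by rewrite !wsum_oriented_point_add //; have := i_max k kU; lra.
have [C [B [CU BUi B_gt1 FB]]] := dominant_variable_G_pattern F_mono i_dominant iU F_i F_Ui.
have iB : i \notin B by apply: contraTN iU => /(subsetP BUi); rewrite in_setD1 eqxx.
have BU k : k \in B -> k \in U by move/(subsetP BUi); rewrite in_setD1 => /andP [].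
apply: (G_restriction_of_pattern (p := oriented_point w U c C) (o := wpos w) iB B_gt1).
move=> x xp; pose S := [set j in U | x j == wpos w j].
have x_glue : x =1 glue U x c.
  move=> j; rewrite /glue; case: (boolP (j \in U)) => // jU.
  rewrite xp /oriented_point /glue ?(negbTE jU) // in_setU1 negb_or.
  by apply/andP; split; [apply: contraNneq jU => -> | apply: contra jU; apply: BU].
rewrite (threshold_ext x_glue) (threshold_ext (glue_oriented_point w U c x)) -/S -/(F S) FB.
- congr (_ && _ || _); first by rewrite inE iU.
    by apply: eq_existsb_in => k /BU kU; rewrite inE kU.
  apply/subsetP/forall_inP => SB k kB; first by move: (SB k kB); rewrite inE => /andP [].
  by rewrite inE BU // SB.
move=> j jiB; rewrite inE xp // /oriented_point /glue.
case: (boolP (j \in U)) => jU /=; first by case: (j \in C); case: (wpos w j).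
by rewrite (contraNF (subsetP CU j) jU).
Qed.

Lemma threshold_lro_on : ~ has_G_restriction f ->
  forall (U : {set 'I_n}) (c : 'I_n -> bool), lro_on U (fun x => f (glue U x c)).
Proof.
move=> noG U; elim: {U}_.+1 {-2}U (ltnSn #|U|) => // k IH U U_lt c.
have [-> | U_ne0] := eqVneq U set0.
  by left; exists (f c) => x; apply: threshold_ext => j; rewrite /glue inE.
have [i iU i_max] := exists_argmax (fun j => Rabs (w j)) U_ne0.
have U'_lt : (#|U :\ i| < k)%N by rewrite (cardsD1 i U) iU in U_lt.
pose c' (v : bool) j := if j == i then v else c j.
have fix_i v x : x i = v -> f (glue U x c) = f (glue (U :\ i) x (c' v)).
  by move=> <-; apply: threshold_ext; apply: glue_fix.
case F_i: (f (oriented_point w U c [set i])).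
  apply: (lro_on_extend (v := wpos w i) (b := true) iU _ (fix_i _) (IH _ U'_lt _)) => x xi.
  apply: threshold_mono F_i => j; rewrite (glue_oriented_point w); apply: oriented_point_mono.
  by rewrite sub1set inE iU xi eqxx.
case F_Ui: (f (oriented_point w U c (U :\ i))).
  by case: noG; apply: (threshold_G_restriction iU i_max F_i F_Ui).
apply: (lro_on_extend (v := ~~ wpos w i) (b := false) iU _ (fix_i _) (IH _ U'_lt _)) => x xi.
apply: (contraFF _ F_Ui); apply: threshold_mono => j; rewrite (glue_oriented_point w).
apply: oriented_point_mono; apply/subsetP => l; rewrite !inE.
by case: (eqVneq l i) => [->|_ /andP [] //] /andP [_ /eqP]; rewrite xi; case: (wpos w i).
Qed.

End ThresholdFunction.

Theorem mainTheorem17 (n : nat) (f : bfun n) :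
  threshold f -> (lro f <-> ~ has_G_restriction f).
Proof.
move=> [w [t f_false]]; split; first exact: lro_no_G_restriction.
move=> noG; have glueT x : f (glue setT x (fun _ => false)) = f x.
  by apply: (threshold_ext f_false) => j; rewrite /glue inE.
case: (threshold_lro_on f_false noG setT (fun _ => false)) => [[b fb]|[tt [tt_nested _ ftt]]].
  by left; exists b => x; rewrite -glueT.
by right; exists tt; split=> // x; rewrite -glueT.
Qed.
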